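(* Let $m\geq 0$ and $k\geq 1$ be integers and let $n$ be a nonnegative integer with $n<t(m+1,k)$, where \[ t(s,k)= s\left(\left\lfloor \frac{s}{k}\right\rfloor +1\right)k-\binom{\lfloor s/k\rfloor +1}{2}k^2 . \] Then $b(n,k)\leq m$.
   Context: For a cell $u$ of the Young diagram of a partition $\lambda$, the hook length of $u$ is the number of cells $v$ of the diagram with $v=u$, or $v$ below $u$ in the same column, or $v$ to the right of $u$ in the same row. $\alpha_k(\lambda)$ is the number of cells of the Young diagram of $\lambda$ with hook length exactly $k$. $P(n)$ is the set of partitions of $n$ (with $P(0)$ containing only the empty partition), and $b(n,k)=\max\{\alpha_k(\lambda)\colon\lambda\in P(n)\}$. *)

From mathcomp Require Import all_boot.
Set Implicit Arguments. Unset Strict Implicit. Unset Printing Implicit Defensive.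

Definition is_partition (n : nat) (l : seq nat) : bool :=
  [&& sorted geq l, all (fun x => 0 < x) l & sumn l == n].

(* Young diagram of l: cells (i, j) with i < size l and j < nth 0 l i
   (row i, column j, rows indexed top to bottom). *)
(* hook length of cell (i,j): the cell itself, the cells to its right in row i,
   and the cells below it in column j. *)
Definition hook_length (l : seq nat) (i j : nat) : nat :=
  1 + (nth 0 l i - j.+1) + count (fun x => j < x) (drop i.+1 l).

Definition alpha (k : nat) (l : seq nat) : nat :=
  \sum_(i < size l) \sum_(j < nth 0 l i) (hook_length l i j == k).

(* Every partition of n has at most n parts, each at most n; padding with zeros
   gives an n-tuple over 'I_n.+1. part_of drops the zero entries. *)
Definition part_of (n : nat) (t : n.-tuple 'I_n.+1) : seq nat :=
  filter (fun x => 0 < x) (map val t).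

Definition b (n k : nat) : nat :=
  \max_(t : n.-tuple 'I_n.+1 | is_partition n (part_of t)) alpha k (part_of t).

Definition tfun (s k : nat) : nat :=
  s * (s %/ k + 1) * k - 'C(s %/ k + 1, 2) * k ^ 2.

(* Encode a partition l with r parts by its beta-set X = {l_i + r - 1 - i}, whose
   sum is n + C(r, 2).  A cell of hook length k in row i makes beta i k-removable
   (beta i - k >= 0 is not in X), and a row has at most one such cell.  Replacing
   each x in X by k * (its rank inside its residue class mod k) + (x mod k) gives
   r distinct numbers, of sum >= C(r, 2); and x exceeds this number by k for every
   removable y <= x of its class, as such y leave distinct holes y - k below x.
   Hence n >= k * #{(y, x) : y <= x congruent, y removable}, and a pigeonhole
   induction over the e removable elements bounds the congruent pairs among them
   below by sum_(j < e) (j / k + 1) = t(e, k) / k.  So n < t(m + 1, k) forces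
   e <= m. *)

From mathcomp Require Import all_boot zify ring.
Set Implicit Arguments. Unset Strict Implicit.

Section Stair.

Variable k : nat.
Hypothesis k_gt0 : 0 < k.

Definition stair (s : nat) : nat := \sum_(j < s) (j %/ k).+1.

Lemma stairS s : stair s.+1 = stair s + (s %/ k).+1.
Proof. by rewrite /stair big_ord_recr. Qed.

Lemma leq_stair s1 s2 : s1 <= s2 -> stair s1 <= stair s2.
Proof.
move=> /subnK <-; elim: (s2 - s1) => [|d IH] //.
by rewrite addSn stairS (leq_trans IH) ?leq_addr.
Qed.

Lemma stair_closed s :
  k * stair s + 'C(s %/ k + 1, 2) * k ^ 2 = s * (s %/ k + 1) * k.
Proof.
elim: s => [|s IH]; first by rewrite /stair big_ord0 div0n muln0.
rewrite stairS; have s_eq := divn_eq s k; have := ltn_pmod s k_gt0.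
set q := s %/ k in IH s_eq *; set r := s %% k in s_eq *.
rewrite leq_eqVlt => /orP [/eqP r_eq | r_lt].
- have -> : s.+1 %/ k = q.+1 by rewrite s_eq -addnS r_eq -mulSnr mulnK.
  move: IH; set S := stair s; rewrite !addn1 -r_eq s_eq -r_eq => IH.
  rewrite binS bin1; set C := 'C(q.+1, 2) in IH *.
  have -> : r.+1 * (S + q.+1) + (C + q.+1) * r.+1 ^ 2
           = (r.+1 * S + C * r.+1 ^ 2) + (r.+1 * q.+1 + q.+1 * r.+1 ^ 2) by ring.
  rewrite IH; ring.
- have -> : s.+1 %/ k = q by rewrite s_eq -addnS divnMDl // divn_small // addn0.
  nia.
Qed.

Lemma tfun_stair s : tfun s k = k * stair s.
Proof. by rewrite /tfun -stair_closed addnK. Qed.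

Lemma leq_tfun s1 s2 : s1 <= s2 -> tfun s1 k <= tfun s2 k.
Proof. by move=> s1_le; rewrite !tfun_stair leq_mul2l leq_stair ?orbT. Qed.

End Stair.

Lemma sorted_ltn_sumn (a : nat) (s : seq nat) : sorted ltn s -> all (leq a) s ->
  'C(size s, 2) + a * size s <= sumn s.
Proof.
elim: s a => [|x s IH] a /=; first by rewrite muln0.
move=> s_sorted /andP [a_le_x _].
have := IH x.+1 (path_sorted s_sorted) (order_path_min ltn_trans s_sorted).
rewrite binS bin1; nia.
Qed.

Lemma bin2_size_le_sumn (s : seq nat) : uniq s -> 'C(size s, 2) <= sumn s.
Proof.
move=> s_uniq; have s_perm := permEl (perm_sort leq s).
have ltn_sorted : sorted ltn (sort leq s).
  by rewrite ltn_sorted_uniq_leq sort_uniq s_uniq sort_sorted //; exact: leq_total.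
rewrite -(perm_sumn s_perm) -(perm_size s_perm).
have := sorted_ltn_sumn (a := 0) ltn_sorted; rewrite mul0n addn0; apply.
by apply/allP.
Qed.

Lemma sum_nat_of_bool (T : Type) (s : seq T) (P : pred T) :
  \sum_(z <- s) P z = count P s.
Proof. by rewrite -sumn_count sumnE big_map. Qed.

Section Residues.

Variable k : nat.

Definition le_mod_count (S : seq nat) (x : nat) : nat :=
  count (fun y => (y <= x) && (y %% k == x %% k)) S.

Definition lt_mod_count (S : seq nat) (x : nat) : nat :=
  count (fun y => (y < x) && (y %% k == x %% k)) S.

Definition removable (X : seq nat) (y : nat) : bool := (k <= y) && (y - k \notin X).

Hypothesis k_gt0 : 0 < k.

Lemma size_sum_count_mod (E : seq nat) :
  size E = \sum_(r < k) count (fun y => y %% k == r) E.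
Proof.
elim: E => [|a E IH]; first by rewrite big1.
rewrite /= big_split /= -IH -add1n; congr (_ + _).
rewrite (bigD1 (Ordinal (ltn_pmod a k_gt0))) //= eqxx big1 // => r r_neq.
by apply/eqP; rewrite eqb0; apply: contra r_neq => /eqP a_r; apply/eqP/val_inj.
Qed.

Lemma exists_large_mod_class (E : seq nat) s : size E = s.+1 ->
  exists2 x, x \in E & s %/ k < count (fun y => y %% k == x %% k) E.
Proof.
move=> E_size.
have [/hasP [x x_in_E x_large] | /hasPn small] :=
  boolP (has (fun x => s %/ k < count (fun y => y %% k == x %% k) E) E).
  by exists x.
suff : s.+1 <= \sum_(r < k) s %/ k.
  by rewrite sum_nat_const card_ord mulnC leqNgt ltnS leq_divM.
rewrite -E_size size_sum_count_mod; apply: leq_sum => r _.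
have [/hasP [x x_in_E /eqP <-] | /hasPn no_r] := boolP (has (fun y => y %% k == r) E).
  by rewrite leqNgt small.
by rewrite (eq_in_count (a2 := pred0)) ?count_pred0 // => y /no_r /negbTE.
Qed.

(* Remove an element x of a residue class with more than s %/ k members: it forms a
   congruent pair with each of them, which pays for the last summand of stair. *)
Lemma stair_le_sum_le_mod_count (E : seq nat) :
  stair k (size E) <= \sum_(y <- E) le_mod_count E y.
Proof.
move E_size: (size E) => s; elim: s E E_size => [|s IH] E E_size.
  by rewrite /stair big_ord0.
have [x x_in_E x_class_large] := exists_large_mod_class E_size.
set E' := rem x E; have E_perm : perm_eq E (x :: E') by exact: perm_to_rem.
have E'_size : size E' = s by rewrite size_rem // E_size.
have IH' := IH E' E'_size.
have split_count y :
    le_mod_count E y = ((x <= y) && (x %% k == y %% k)) + le_mod_count E' y.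
  by rewrite /le_mod_count (permP E_perm).
rewrite (perm_big _ E_perm) big_cons (eq_bigr _ (fun y _ => split_count y)).
rewrite big_split /= sum_nat_of_bool stairS split_count leqnn eqxx.
have x_class : count (fun y => y %% k == x %% k) E =
               (count (fun y => y %% k == x %% k) E').+1.
  by rewrite (permP E_perm) /= eqxx.
have : count (fun y => y %% k == x %% k) E' <=
       le_mod_count E' x + count (fun y => (x <= y) && (x %% k == y %% k)) E'.
  rewrite /le_mod_count -count_predUI; apply: leq_trans (leq_addr _ _).
  by apply: sub_count => y /= /eqP ->; rewrite eqxx !andbT leq_total.
lia.
Qed.

Lemma lt_le_mod_count (X : seq nat) x :
  x \in X -> lt_mod_count X x < le_mod_count X x.
Proof.
move=> x_in_X; set below := fun y => (y < x) && (y %% k == x %% k).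
have disjoint : count (predI below (pred1 x)) X = 0.
  rewrite (eq_count (a2 := pred0)) ?count_pred0 // => y /=.
  by rewrite andbC; case: eqP => // ->; rewrite /below ltnn.
have := count_predUI below (pred1 x) X; rewrite disjoint addn0 => split_count.
apply: leq_trans (_ : count (predU below (pred1 x)) X <= _).
  rewrite split_count /lt_mod_count -/below -{1}[count below X]addn0 ltn_add2l.
  by rewrite -has_count has_pred1.
by apply: sub_count => y /= /orP [/andP [/ltnW -> ->] | /eqP ->]; rewrite ?leqnn ?eqxx.
Qed.

Lemma lt_mod_count_ltn (X : seq nat) x1 x2 :
  x1 \in X -> x1 < x2 -> x1 %% k = x2 %% k -> lt_mod_count X x1 < lt_mod_count X x2.
Proof.
move=> x1_in_X x1_lt_x2 same_mod; apply: leq_trans (lt_le_mod_count x1_in_X) _.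
apply: sub_count => y /= /andP [y_le /eqP ->].
by rewrite same_mod eqxx andbT (leq_ltn_trans y_le).
Qed.

Lemma size_uniq_lt_mod (s : seq nat) x : uniq s ->
  {in s, forall z, z < x /\ z %% k = x %% k} -> size s <= x %/ k.
Proof.
move=> s_uniq below_x; rewrite -(size_map (divn^~ k)) -[x %/ k](size_iota 0).
apply: uniq_leq_size.
  rewrite map_inj_in_uniq // => z1 z2 /below_x [_ z1_mod] /below_x [_ z2_mod] same_div.
  by rewrite (divn_eq z1 k) (divn_eq z2 k) same_div z1_mod z2_mod.
move=> _ /mapP [z /below_x [z_lt_x z_mod] ->]; rewrite mem_iota add0n /=.
rewrite -(ltn_pmul2r k_gt0); have := divn_eq z k; have := divn_eq x k; lia.
Qed.

Lemma lt_mod_add_le_mod_removable (X : seq nat) x : uniq X ->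
  lt_mod_count X x + le_mod_count (filter (removable X) X) x <= x %/ k.
Proof.
move=> X_uniq.
set B := filter (fun z => (z < x) && (z %% k == x %% k)) X.
set D := map (subn^~ k)
  (filter (fun y => (y <= x) && (y %% k == x %% k)) (filter (removable X) X)).
have -> : lt_mod_count X x + le_mod_count (filter (removable X) X) x = size (B ++ D).
  by rewrite size_cat size_map !size_filter.
apply: size_uniq_lt_mod => [|z].
  rewrite cat_uniq filter_uniq //=; apply/andP; split.
    apply/hasPn => z /mapP [y]; rewrite !mem_filter.
    by move=> /andP [_ /andP [/andP [_ y_hole] _]] ->; rewrite negb_and y_hole orbT.
  rewrite map_inj_in_uniq ?filter_uniq // => y1 y2.
  rewrite !mem_filter => /and3P [_ /andP [k_le1 _] _] /and3P [_ /andP [k_le2 _] _].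
  lia.
rewrite mem_cat => /orP [|/mapP [y]].
  by rewrite mem_filter => /andP [/andP [z_lt /eqP z_mod] _].
rewrite !mem_filter => /andP [/andP [y_le /eqP y_mod]] /andP [/andP [k_le _] _] ->.
by split; [lia | rewrite -y_mod -(modnDr (y - k)) subnK].
Qed.

Lemma uniq_lt_mod_rank (X : seq nat) :
  uniq X -> uniq [seq lt_mod_count X x * k + x %% k | x <- X].
Proof.
move=> X_uniq; rewrite map_inj_in_uniq // => x1 x2 x1_in_X x2_in_X same_rank.
have same_mod : x1 %% k = x2 %% k.
  by move: (congr1 (modn^~ k) same_rank); rewrite /= !modnMDl !modn_mod.
have same_count : lt_mod_count X x1 = lt_mod_count X x2.
  move: (congr1 (divn^~ k) same_rank).
  by rewrite /= !divnMDl // !divn_small ?ltn_pmod // !addn0.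
case: (ltngtP x1 x2) => // x_lt.
  by have := lt_mod_count_ltn x1_in_X x_lt same_mod; rewrite same_count ltnn.
by have := lt_mod_count_ltn x2_in_X x_lt (esym same_mod); rewrite same_count ltnn.
Qed.

Lemma leq_sumn_removable (X : seq nat) : uniq X ->
  'C(size X, 2) + k * \sum_(x <- X) le_mod_count (filter (removable X) X) x <= sumn X.
Proof.
move=> X_uniq; have := bin2_size_le_sumn (uniq_lt_mod_rank X_uniq).
rewrite size_map => rank_bound; apply: leq_trans (leq_add rank_bound (leqnn _)) _.
rewrite sumnE big_map big_distrr -big_split /= sumnE; apply: leq_sum => x _.
have := lt_mod_add_le_mod_removable x X_uniq; have := divn_eq x k; nia.
Qed.

End Residues.

Lemma nth_geq_sorted (l : seq nat) a b : sorted geq l -> a <= b -> b < size l ->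
  nth 0 l b <= nth 0 l a.
Proof.
move=> l_sorted a_le_b b_lt; apply: (sorted_leq_nth (rev_trans leq_trans) leqnn) => //.
by rewrite inE (leq_ltn_trans a_le_b).
Qed.

Lemma count_gt_sorted (s : seq nat) j p : sorted geq s ->
  (p < count (fun x => j < x) s) = (j < nth 0 s p).
Proof.
elim: s p => [|a s IH] p /=; first by rewrite nth_nil.
move=> a_path; have s_below_a := order_path_min (rev_trans leq_trans) a_path.
have [j_lt_a | a_le_j] := ltnP j a.
  by case: p => [|p] //=; rewrite add1n ltnS IH // (path_sorted a_path).
have nth_le_a q : nth 0 s q <= a.
  case: (ltnP q (size s)) => [q_lt | q_ge]; last by rewrite nth_default.
  by apply: (allP s_below_a); rewrite mem_nth.
rewrite add0n (eq_in_count (a2 := pred0)) ?count_pred0; last first.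
  by move=> x /(allP s_below_a) x_le_a /=; rewrite ltnNge (leq_trans x_le_a).
by case: p => [|p]; apply/esym/negbTE; rewrite -leqNgt //= (leq_trans (nth_le_a p)).
Qed.

Section BetaNumbers.

Variable l : seq nat.
Hypothesis l_sorted : sorted geq l.

Definition beta (i : nat) : nat := nth 0 l i + ((size l).-1 - i).

Definition beta_set : seq nat := map beta (iota 0 (size l)).

Lemma beta_ltn i i' : i < i' -> i' < size l -> beta i' < beta i.
Proof.
move=> i_lt i'_lt; have := nth_geq_sorted l_sorted (ltnW i_lt) i'_lt.
rewrite /beta; lia.
Qed.

Lemma uniq_beta_set : uniq beta_set.
Proof.
rewrite map_inj_in_uniq ?iota_uniq // => i i'; rewrite !mem_iota !add0n.
move=> /andP [_ i_lt] /andP [_ i'_lt] same_beta.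
case: (ltngtP i i') => // [i_lt_i' | i'_lt_i].
  by have := beta_ltn i_lt_i' i'_lt; rewrite same_beta ltnn.
by have := beta_ltn i'_lt_i i_lt; rewrite same_beta ltnn.
Qed.

Lemma sumn_beta_set : sumn beta_set = sumn l + 'C(size l, 2).
Proof.
rewrite /beta_set sumnE big_map /beta big_split /= -bin2_sum big_nat_rev /=.
rewrite [sumn l]sumnE [in RHS](big_nth 0) /index_iota subn0; congr (_ + _).
by apply: eq_bigr => i _; lia.
Qed.

Lemma hook_length_ltn i j j' : j < j' -> j' < nth 0 l i ->
  hook_length l i j' < hook_length l i j.
Proof.
move=> j_lt_j' j'_lt; rewrite /hook_length.
have : count (fun x => j' < x) (drop i.+1 l) <= count (fun x => j < x) (drop i.+1 l).
  by apply: sub_count => x /=; apply: ltn_trans.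
lia.
Qed.

(* The hook of (i, j) ends in row i + leg, so beta i - hook lies strictly between
   beta (i + leg + 1) and beta (i + leg). *)
Lemma removable_beta i j : i < size l -> j < nth 0 l i ->
  removable (hook_length l i j) beta_set (beta i).
Proof.
move=> i_lt j_lt; rewrite /removable /hook_length.
set leg := count _ (drop i.+1 l).
have leg_le : leg <= size l - i.+1 by rewrite -size_drop count_size.
apply/andP; split; first by rewrite /beta; lia.
apply/negP => /mapP [i']; rewrite mem_iota add0n => /andP [_ i'_lt] beta_eq.
case: (leqP i' i) => [i'_le_i | i_lt_i'].
  have : beta i <= beta i'.
    case: (ltngtP i' i) i'_le_i => // [i'_lt_i _ | -> //].
    exact: ltnW (beta_ltn i'_lt_i i_lt).
  move: beta_eq; rewrite /beta; lia.
have leg_spec := count_gt_sorted j (i' - i.+1) (drop_sorted i.+1 l_sorted).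
rewrite -/leg nth_drop subnKC // in leg_spec.
move: beta_eq leg_spec; rewrite /beta; case: (ltnP j (nth 0 l i')); lia.
Qed.

Lemma row_hooks_le i k : i < size l ->
  \sum_(j < nth 0 l i) (hook_length l i j == k) <= removable k beta_set (beta i).
Proof.
move=> i_lt.
have [/existsP [j0 /eqP hook_j0] | no_hook] :=
  boolP [exists j : 'I_(nth 0 l i), hook_length l i j == k]; last first.
  rewrite big1 // => j _; apply/eqP; rewrite eqb0.
  by apply: contraNN no_hook => hook_j; apply/existsP; exists j.
rewrite -hook_j0 (removable_beta i_lt (ltn_ord j0)) (bigD1 j0) //= eqxx big1 // => j j_neq.
apply/eqP; rewrite eqb0; apply/eqP => same_hook.
case: (ltngtP (val j) (val j0)) => [j_lt | j_gt | /val_inj j_eq].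
- by have := hook_length_ltn j_lt (ltn_ord j0); rewrite same_hook ltnn.
- by have := hook_length_ltn j_gt (ltn_ord j); rewrite same_hook ltnn.
- by rewrite j_eq eqxx in j_neq.
Qed.

Lemma alpha_le_count_removable k : alpha k l <= count (removable k beta_set) beta_set.
Proof.
rewrite {2}/beta_set count_map -sum_nat_of_bool /alpha.
have -> : iota 0 (size l) = index_iota 0 (size l) by rewrite /index_iota subn0.
by rewrite big_mkord; apply: leq_sum => i _; exact: row_hooks_le.
Qed.

End BetaNumbers.

Lemma tfun_alpha_le_sumn k l : 0 < k -> sorted geq l -> tfun (alpha k l) k <= sumn l.
Proof.
move=> k_gt0 l_sorted; set X := beta_set l; set E := filter (removable k X) X.
have := leq_sumn_removable k_gt0 (uniq_beta_set l_sorted).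
rewrite size_map size_iota sumn_beta_set // addnC leq_add2r -/X -/E => sum_bound.
rewrite tfun_stair //; apply: leq_trans sum_bound; rewrite leq_mul2l; apply/orP; right.
have alpha_le : alpha k l <= size E by rewrite size_filter alpha_le_count_removable.
apply: leq_trans (leq_stair k alpha_le) _.
apply: leq_trans (stair_le_sum_le_mod_count k_gt0 E) _.
by rewrite {1}/E big_filter [\sum_(x <- X) _](bigID (removable k X)) /= leq_addr.
Qed.

Theorem corollary3p3 (m k n : nat) :
  1 <= k -> n < tfun m.+1 k -> b n k <= m.
Proof.
move=> k_gt0 n_lt; apply/bigmax_leqP => t /and3P [l_sorted _ /eqP l_sum].
rewrite leqNgt; apply: contraL n_lt => alpha_gt; rewrite -leqNgt -l_sum.
exact: leq_trans (leq_tfun k_gt0 alpha_gt) (tfun_alpha_le_sumn k_gt0 l_sorted).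
Qed.
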